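(* The number $r(\eta,S)$ of visits to the root $\emptyset$ (over all time, by all frogs) in the frog model $(\eta,S)$ is a continuous icv statistic and a continuous pgf statistic.
   Context: Frog model: $G$ is a countable set of vertices with a distinguished root $\emptyset$. A frog model $(\eta,S)$ consists of counts $\eta(v)\in\{0,1,2,\dots\}$ for $v\neq\emptyset$ and paths $S_\cdot(v,i)=(S_j(v,i))_{j\geq0}$ in $G$ with $S_0(v,i)=v$ (including a path for the single frog at the root). Initially one active frog sits at $\emptyset$ and $\eta(v)$ sleeping frogs sit at each $v\neq\emptyset$; the $i$-th frog at $v$, from its activation time on, follows $S_\cdot(v,i)$ in discrete time; when an active frog visits a vertex with sleeping frogs, all of them activate. For a path $P_\cdot$ starting at a nonroot vertex, $\sigma_{P_\cdot}(\eta,S)$ is the model with one extra frog of path $P_\cdot$ added at $P_0$. For a statistic $f$ with values in $[0,\infty]$, $\Delta_{P_\cdot}f(\eta,S)=f(\sigma_{P_\cdot}(\eta,S))-f(\eta,S)$. $f$ is an icv statistic if for all $(\eta,S)$ and all paths $P^1_\cdot,\dots,P^m_\cdot$ starting at a common vertex: (i) for $m=1,2$, $(-1)^m\Delta_{P^1_\cdot}\cdots\Delta_{P^m_\cdot}f(\eta,S)\le0$ whenever all values $f(\sigma_{P^{u_1}_\cdot}\cdots\sigma_{P^{u_j}_\cdot}(\eta,S))$, $\{u_1,\dots,u_j\}\subseteq\{1,\dots,m\}$, are finite; (ii) $f(\eta,S)=\infty$ implies $f(\sigma_{P^1_\cdot}(\eta,S))=\infty$; (iii) $f(\sigma_{P^1_\cdot}\sigma_{P^2_\cdot}(\eta,S))=\infty$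 implies $f(\sigma_{P^i_\cdot}(\eta,S))=\infty$ for $i=1$ or $2$. $f$ is a pgf statistic if (ii),(iii) hold and (i) holds for all $m\ge1$. $f$ is continuous if $\eta_k(v)\nearrow\eta(v)$ for all $v$ implies $f(\eta_k,S)\nearrow f(\eta,S)$. *)

From HB Require Import structures.
From mathcomp Require Import all_boot all_order all_algebra.
From mathcomp Require Import all_classical all_reals all_analysis.
Set Implicit Arguments. Unset Strict Implicit. Unset Printing Implicit Defensive.
Import Order.TTheory GRing.Theory Num.Theory.
Local Open Scope classical_set_scope.
Local Open Scope ring_scope.
Local Open Scope ereal_scope.

(* A frog model on the vertex set V (a countable type) with root [root]:
   [fm_eta v]  = number of sleeping frogs at v (only meaningful for v <> root),
   [fm_S v i]  = path of the i-th frog at v (frogs indexed 0,1,...),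
   the single frog at the root has path [fm_S root 0]. *)
Record frog_model (V : Type) := FM {
  fm_eta : V -> nat;
  fm_S : V -> nat -> nat -> V }.

Section Frog.
Variables (V : countType) (root : V).

Definition valid_model (c : frog_model V) : Prop :=
  forall v i, fm_S c v i 0 = v.

Definition nfrogs (c : frog_model V) (v : V) : nat :=
  if v == root then 1%N else fm_eta c v.

(* Dynamics: a frog placed at v is activated at the first time an active frog
   visits v and from then on follows its path. *)
Inductive activated (c : frog_model V) : V -> Prop :=
| act_root : activated c root
| act_step u i k : activated c u -> (i < nfrogs c u)%N ->
                   activated c (fm_S c u i k).

(* Visits to the root over all time by all frogs: the triples (v,i,k) such
   that the i-th frog at v is ever activated and is at the root k steps after
   its activation. *)
Definition root_visits (c : frog_model V) : set (V * nat * nat) :=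
  [set x | activated c x.1.1 /\ (x.1.2 < nfrogs c x.1.1)%N /\
           fm_S c x.1.1 x.1.2 x.2 = root].

Definition r_stat (R : realType) (c : frog_model V) : \bar R :=
  (\esum_(x in root_visits c) (1%E : \bar R))%R.

Definition sigma (P : nat -> V) (c : frog_model V) : frog_model V :=
  FM (fun v => if v == P 0%N then (fm_eta c v).+1 else fm_eta c v)
     (fun v i => if (v == P 0%N) && (i == fm_eta c v) then P else fm_S c v i).

Definition Delta (R : realType) (P : nat -> V)
  (f : frog_model V -> \bar R) : frog_model V -> \bar R :=
  fun c => f (sigma P c) - f c.

Definition iterDelta (R : realType) (Ps : seq (nat -> V))
  (f : frog_model V -> \bar R) : frog_model V -> \bar R :=
  foldr (@Delta R) f Ps.

Definition sigmas (Ps : seq (nat -> V)) (c : frog_model V) : frog_model V :=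
  foldr sigma c Ps.

Definition common_start (Ps : seq (nat -> V)) : Prop :=
  exists v, v != root /\ all (fun P => P 0%N == v) Ps.

Definition cond_i (R : realType) (f : frog_model V -> \bar R) (m : nat) : Prop :=
  forall c Ps, valid_model c -> size Ps = m -> common_start Ps ->
    (forall b : bitseq, f (sigmas (mask b Ps) c) \is a fin_num) ->
    ((-1) ^+ m)%:E * iterDelta Ps f c <= 0.

Definition cond_ii (R : realType) (f : frog_model V -> \bar R) : Prop :=
  forall c P, valid_model c -> P 0%N != root ->
    f c = +oo -> f (sigma P c) = +oo.

Definition cond_iii (R : realType) (f : frog_model V -> \bar R) : Prop :=
  forall c P1 P2, valid_model c -> P1 0%N != root -> P2 0%N = P1 0%N ->
    f (sigma P1 (sigma P2 c)) = +oo ->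
    f (sigma P1 c) = +oo \/ f (sigma P2 c) = +oo.

Definition is_statistic (R : realType) (f : frog_model V -> \bar R) : Prop :=
  forall c, 0 <= f c.

Definition icv_stat (R : realType) (f : frog_model V -> \bar R) : Prop :=
  is_statistic f /\ cond_i f 1 /\ cond_i f 2 /\ cond_ii f /\ cond_iii f.

Definition pgf_stat (R : realType) (f : frog_model V -> \bar R) : Prop :=
  is_statistic f /\ (forall m, (0 < m)%N -> cond_i f m) /\ cond_ii f /\ cond_iii f.

Definition continuous_stat (R : realType) (f : frog_model V -> \bar R) : Prop :=
  forall (eta_ : nat -> V -> nat) (eta : V -> nat) (S : V -> nat -> nat -> V),
    valid_model (FM eta S) ->
    (forall v k, (eta_ k v <= eta_ k.+1 v)%N) ->
    (forall v, \forall k \near \oo, eta_ k v = eta v) ->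
    (forall k, f (FM (eta_ k) S) <= f (FM (eta_ k.+1) S)) /\
    (fun k => f (FM (eta_ k) S)) @ \oo --> f (FM eta S).

End Frog.

(* Adding frogs at a vertex v changes nothing unless v is activated.  If it is,
   the root visits of sigma_{P_1} ... sigma_{P_m} c split disjointly into those of
   c, those of the added frogs themselves, and those of frogs sleeping forever in c
   that are woken by the new frogs.  The last set is the union over i of the set
   E(P_i) of visits woken by P_i alone, so
     r (sigma_A c) = r c + sum_(P in A) w P + #(\bigcup_(P in A) E P)
   is a coverage function of A.  By inclusion-exclusion its iterated differences
   are Delta_{P_1} ... Delta_{P_m} r = (-1)^(m-1) #(\bigcap_i E P_i) for m >= 2
   (plus w P_1 for m = 1), which gives the sign conditions (i); (ii) and (iii)
   follow from the same decomposition.  Continuity holds because a root visit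
   relies on a finite chain of activations, which already exists in the model
   with eta_k for k large. *)

From HB Require Import structures.
From mathcomp Require Import all_boot all_order all_algebra.
From mathcomp Require Import all_classical all_reals all_analysis.
From mathcomp Require Import ring.
Set Implicit Arguments. Unset Strict Implicit. Unset Printing Implicit Defensive.
Import Order.TTheory GRing.Theory Num.Theory.
Local Open Scope classical_set_scope.
Local Open Scope ring_scope.
Local Open Scope ereal_scope.

Section Cardinality.
Variables (R : realType) (T : choiceType).
Implicit Types A B : set T.

Definition ecard A : \bar R := \esum_(x in A) 1.

Lemma ecard_ge0 A : 0 <= ecard A.
Proof. exact: esum_ge0. Qed.

Lemma ecardID B A : ecard A = ecard (A `&` B) + ecard (A `\` B).
Proof. exact: esumID. Qed.

Lemma ecardU A B : A `<=` ~` B -> ecard (A `|` B) = ecard A + ecard B.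
Proof. by move=> /disjoints_subset AB0; rewrite (ecardID A) setUK setUKD // AB0. Qed.

Lemma le_ecard A B : A `<=` B -> ecard A <= ecard B.
Proof.
by move=> AB; rewrite (ecardID A B) (setIidr AB) leeDl // ecard_ge0.
Qed.

Lemma fin_ecard_sub A B : A `<=` B -> ecard B \is a fin_num -> ecard A \is a fin_num.
Proof.
by move=> AB; rewrite !ge0_fin_numE ?ecard_ge0 //; apply/le_lt_trans/le_ecard.
Qed.

Lemma finite_sub_nondecreasing (A_ : nat -> set T) (F : set T) :
  {homo A_ : m n / (m <= n)%N >-> m `<=` n} -> finite_set F ->
  F `<=` \bigcup_k A_ k -> exists K, F `<=` A_ K.
Proof.
move=> A_nd /finite_seqP[s ->]; elim: s => [|x s IH] sA.
  by exists 0%N.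
have [K1 sK1] : exists K, [set` s] `<=` A_ K.
  by apply: IH => y sy; apply: sA; rewrite /= inE sy orbT.
have [K2 _ xK2] : (\bigcup_k A_ k) x by apply: sA; rewrite /= inE eqxx.
exists (maxn K1 K2) => y; rewrite /= inE => /predU1P[->|sy].
  exact: A_nd (leq_maxr _ _) _ xK2.
exact/(A_nd _ _ (leq_maxl _ _))/sK1.
Qed.

Lemma ecard_nondecreasing_cvg (A_ : nat -> set T) (A : set T) :
  {homo A_ : m n / (m <= n)%N >-> m `<=` n} ->
  (forall k, A_ k `<=` A) -> A `<=` \bigcup_k A_ k ->
  ecard (A_ k) @[k --> \oo] --> ecard A.
Proof.
move=> A_nd A_sub A_cup.
have nd : nondecreasing_seq (fun k => ecard (A_ k)) by move=> m n /A_nd /le_ecard.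
suff -> : ecard A = ereal_sup (range (fun k => ecard (A_ k))).
  exact: ereal_nondecreasing_cvgn.
apply/eqP; rewrite eq_le; apply/andP; split.
  apply: ge_ereal_sup => _ [F [finF FA] <-].
  have [K FK] := finite_sub_nondecreasing A_nd finF (subset_trans FA A_cup).
  apply: (@le_trans _ _ (ecard (A_ K))); last by apply: ereal_sup_ubound; exists K.
  by apply: ereal_sup_ubound; exists F.
by apply: ge_ereal_sup => _ [k _ <-]; exact: le_ecard.
Qed.

End Cardinality.
Arguments ecard {R T}.
Arguments ecardID {R T}.

Section CoverageDifferences.
Variables (R : realType) (T : choiceType) (X : Type).
Variables (ok : pred X) (w : X -> \bar R) (E : X -> set T) (g : seq X -> \bar R).
Local Notation ecard := (@ecard R T).
Hypothesis w_ge0 : forall P, 0 <= w P.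
Hypothesis g_cons : forall P A, all ok (P :: A) ->
  g (P :: A) = g A + w P + ecard (E P `\` \big[setU/set0]_(Q <- A) E Q).

Let diffs_step (c a b : \bar R) (n : nat) :
  c \is a fin_num -> a \is a fin_num -> b \is a fin_num ->
  c + ((-1) ^+ n)%:E * b - (c + ((-1) ^+ n)%:E * (a + b)) =
  0 + ((-1) ^+ n.+1)%:E * a.
Proof.
move: c a b => [c| |] // [a| |] // [b| |] // _ _ _.
by rewrite -!EFinM -!EFinD; congr EFin; rewrite exprS; ring.
Qed.

Fixpoint diffs (Ps A : seq X) : \bar R :=
  if Ps is P :: Ps' then diffs Ps' (P :: A) - diffs Ps' A else g A.

Definition bounded P := (w P \is a fin_num) && (ecard (E P) \is a fin_num).

Lemma le_g_cons P A : all ok (P :: A) -> g A <= g (P :: A).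
Proof. by move=> okPA; rewrite g_cons // -addeA leeDl // adde_ge0 ?ecard_ge0. Qed.

Lemma bounded_g1 P : ok P -> g [:: P] \is a fin_num -> bounded P.
Proof.
move=> okP; rewrite g_cons /= ?okP // big_nil setD0 !fin_numD.
by case/andP=> /andP[_ wP] EP; apply/andP.
Qed.

Lemma fin_g A : all ok A -> all bounded A -> g [::] \is a fin_num ->
  g A \is a fin_num.
Proof.
elim: A => [|P A IH] // /[dup] okPA /andP[_ okA] /andP[/andP[wP EP] bA] g0.
rewrite g_cons // !fin_numD IH ?wP //=.
by apply: fin_ecard_sub EP; apply: subDsetl.
Qed.

Lemma diffs_cons P Ps A :
  all ok (P :: Ps) -> all ok A -> all bounded (P :: Ps) -> all bounded A ->
  g [::] \is a fin_num ->
  diffs (P :: Ps) A = (if Ps is [::] then w P else 0) +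
    ((-1) ^+ size Ps)%:E *
      ecard (E P `&` \big[setI/setT]_(Q <- Ps) E Q `\` \big[setU/set0]_(Q <- A) E Q).
Proof.
elim: Ps P A => [|Q Ps IH] P A okPs okA bPs bA g0.
  have /andP[/andP[wP EP] _] := bPs.
  rewrite /= g_cons /= ?okA ?andbT //; last by case/andP: okPs.
  rewrite big_nil setIT expr0 mul1e -(addeA (g A)) addeAC subee ?add0e //; exact: fin_g.
have /andP[okP okQs] := okPs; have /andP[bP bQs] := bPs.
rewrite /= -/(diffs (Q :: Ps) (P :: A)) -/(diffs (Q :: Ps) A).
rewrite !IH //= ?okP ?bP //.
set Y := E Q `&` _ `\` \big[setU/set0]_(Q0 <- A) E Q0.
rewrite big_cons setUC -setDDl -/Y (ecardID (E P) Y).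
have -> : E P `&` \big[setI/setT]_(Q0 <- Q :: Ps) E Q0 `\` \big[setU/set0]_(Q0 <- A) E Q0
          = Y `&` E P by rewrite big_cons setIDAC setIDA setIC.
have fin_Y : ecard Y \is a fin_num.
  by apply: fin_ecard_sub (andP (andP bQs).1).2 => x [[]].
apply: diffs_step.
- by case: (Ps) => //; case/andP: bQs => /andP[].
- by apply: fin_ecard_sub fin_Y => x [].
- by apply: fin_ecard_sub fin_Y => x [].
Qed.

Lemma all_bounded_masks Ps : all ok Ps ->
  (forall b, g (mask b Ps) \is a fin_num) -> all bounded Ps.
Proof.
elim: Ps => [//|P Ps IH] /andP[okP okPs] fin_masks /=.
rewrite bounded_g1 ?(fin_masks [:: true]) ?IH // => b.
exact: (fin_masks (false :: b)).
Qed.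

Lemma diffs_sign Ps : (0 < size Ps)%N -> all ok Ps ->
  (forall b, g (mask b Ps) \is a fin_num) ->
  ((-1) ^+ size Ps)%:E * diffs Ps [::] <= 0.
Proof.
case: Ps => [//|P Ps] _ okPs fin_masks.
have bPs := all_bounded_masks okPs fin_masks.
rewrite diffs_cons //; last exact: (fin_masks [::]).
case: Ps okPs fin_masks bPs => [|Q Ps] _ _ bPs.
  by rewrite expr1 expr0 mul1e mulN1e oppe_le0 adde_ge0 ?ecard_ge0.
set x := ecard _.
have : x \is a fin_num.
  by rewrite /x; apply: fin_ecard_sub (andP (andP bPs).1).2 => y [[]].
have : 0 <= x by exact: ecard_ge0.
case: x => [x| |] // x_ge0 _ /=.
have sq_sign : ((-1) ^+ (size Ps).+1 * (-1) ^+ (size Ps).+1 = 1 :> R)%R.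
  by rewrite -exprD -signr_odd addnn odd_double.
by rewrite add0e -!EFinM lee_fin exprS mulN1r mulNr mulrA sq_sign mul1r oppr_le0.
Qed.

Lemma fin_g_pair P1 P2 : ok P1 -> ok P2 ->
  g [:: P1] \is a fin_num -> g [:: P2] \is a fin_num -> g [:: P1; P2] \is a fin_num.
Proof.
move=> ok1 ok2 fin1 fin2; have /andP[w1 E1] := bounded_g1 ok1 fin1.
rewrite g_cons /= ?ok1 ?ok2 // !fin_numD fin2 w1 /=.
by apply: fin_ecard_sub E1; exact: subDsetl.
Qed.

End CoverageDifferences.

Section Dynamics.
Variables (V : countType) (root : V).
Local Notation activated := (activated root).
Local Notation nfrogs := (nfrogs root).

Inductive reachable (c : frog_model V) (Y : set V) : V -> Prop :=
| reachable_base y : Y y -> reachable c Y y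
| reachable_step u i k : reachable c Y u -> (i < nfrogs c u)%N ->
                         reachable c Y (fm_S c u i k).

Section AddFrog.
Variables (P : nat -> V) (c : frog_model V).
Hypothesis P0_neq_root : P 0%N != root.

Lemma nfrogs_sigma u :
  nfrogs (sigma P c) u = if u == P 0%N then (nfrogs c u).+1 else nfrogs c u.
Proof.
rewrite /nfrogs /=; have [->|//] := eqVneq u (P 0%N).
by rewrite (negbTE P0_neq_root).
Qed.

Lemma nfrogs_start : nfrogs c (P 0%N) = fm_eta c (P 0%N).
Proof. by rewrite /nfrogs (negbTE P0_neq_root). Qed.

Lemma sigma_new_frog_lt : (fm_eta c (P 0%N) < nfrogs (sigma P c) (P 0%N))%N.
Proof. by rewrite nfrogs_sigma eqxx nfrogs_start. Qed.

Lemma sigma_new_frog_path : fm_S (sigma P c) (P 0%N) (fm_eta c (P 0%N)) = P.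
Proof. by rewrite /= !eqxx. Qed.

Lemma sigma_old_frog u i : (i < nfrogs c u)%N ->
  (i < nfrogs (sigma P c) u)%N /\ fm_S (sigma P c) u i = fm_S c u i.
Proof.
rewrite nfrogs_sigma /=; have [->|//] := eqVneq u (P 0%N).
by rewrite nfrogs_start => lt_i; split; [exact: ltnW | rewrite (ltn_eqF lt_i)].
Qed.

Lemma sigma_frogP u i : (i < nfrogs (sigma P c) u)%N ->
  (u = P 0%N /\ i = fm_eta c u) \/
  ((i < nfrogs c u)%N /\ fm_S (sigma P c) u i = fm_S c u i).
Proof.
have [->|nu lt_i] := eqVneq u (P 0%N); last first.
  by right; move: lt_i; rewrite nfrogs_sigma /= (negbTE nu).
rewrite nfrogs_sigma eqxx ltnS leq_eqVlt => /predU1P[->|lt_i].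
  by left; rewrite nfrogs_start.
by right; split; last by case: (sigma_old_frog lt_i).
Qed.

Lemma activated_sigma x : activated c x -> activated (sigma P c) x.
Proof.
elim=> [|u i k _ IH /sigma_old_frog[lt_i <-]]; first exact: act_root.
exact: act_step.
Qed.

Lemma reachable_sigma Y x : reachable c Y x -> reachable (sigma P c) Y x.
Proof.
elim=> [y|u i k _ IH /sigma_old_frog[lt_i <-]]; first exact: reachable_base.
exact: reachable_step.
Qed.

Lemma activated_sigmaE x : activated (sigma P c) x <->
  activated c x \/ (activated c (P 0%N) /\ reachable c (range P) x).
Proof.
split.
  elim=> [|u i k _ IH /sigma_frogP[[eu ->]|[lt_i ->]]]; first by left; apply: act_root.
    subst u; have act_P0 : activated c (P 0%N) by case: IH => [|[]].
    by right; split; [|rewrite sigma_new_frog_path; apply: reachable_base; exists k].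
  case: IH => [act_u|[act_P0 reach_u]]; first by left; apply: act_step.
  by right; split; [|apply: reachable_step].
case=> [/activated_sigma //|[act_P0]].
elim=> [_ [k _ <-]|u i k _ IH /sigma_old_frog[lt_i <-]]; last exact: act_step.
have := act_step k (activated_sigma act_P0) sigma_new_frog_lt.
by rewrite sigma_new_frog_path.
Qed.

Lemma reachable_sigmaE Y x : activated c (P 0%N) ->
  reachable (sigma P c) Y x -> reachable c Y x \/ activated (sigma P c) x.
Proof.
move=> act_P0; elim=> [y Yy|u i k _ IH lt_i]; first by left; apply: reachable_base.
case: IH => [reach_u|act_u]; last by right; apply: act_step.
case: (sigma_frogP lt_i) => [[eu _]|[lt_i' ->]]; last by left; apply: reachable_step.
by subst u; right; apply: act_step => //; apply: activated_sigma.
Qed.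

End AddFrog.

Definition starts_at (v : V) (A : seq (nat -> V)) := all (fun P => P 0%N == v) A.

Definition reachable_from (c : frog_model V) (A : seq (nat -> V)) : set V :=
  \big[setU/set0]_(P <- A) reachable c (range P).

Section AddFrogs.
Variables (v : V) (c : frog_model V).
Hypothesis v_neq_root : v != root.

Lemma starts_atP P A : starts_at v (P :: A) -> P 0%N = v /\ starts_at v A.
Proof. by case/andP=> /eqP. Qed.

Lemma starts_at_neq_root P A : starts_at v (P :: A) -> P 0%N != root.
Proof. by case/starts_atP=> ->. Qed.

Lemma sigmas_other_vertex A u : starts_at v A -> u != v ->
  nfrogs (sigmas A c) u = nfrogs c u /\ fm_S (sigmas A c) u = fm_S c u.
Proof.
elim: A => [//|P A IH] /[dup] /starts_at_neq_root P0 /starts_atP[P0v A_v] nuv /=.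
have [<- <-] := IH A_v nuv; have nuP : (u == P 0%N) = false by rewrite P0v; exact/negbTE.
rewrite (nfrogs_sigma _ P0) nuP; split => //; rewrite /sigma /= nuP.
Qed.

Lemma activated_sigmas A x : starts_at v A -> activated c x -> activated (sigmas A c) x.
Proof.
elim: A => [//|P A IH] /[dup] /starts_at_neq_root P0 /starts_atP[_ A_v] act_x /=.
exact/activated_sigma/IH.
Qed.

Lemma reachable_sigmas A Y x : starts_at v A -> reachable c Y x ->
  reachable (sigmas A c) Y x.
Proof.
elim: A => [//|P A IH] /[dup] /starts_at_neq_root P0 /starts_atP[_ A_v] reach_x /=.
exact/reachable_sigma/IH.
Qed.

Lemma reachable_sigmasE A Y x : starts_at v A -> activated c v ->
  reachable (sigmas A c) Y x -> reachable c Y x \/ activated (sigmas A c) x.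
Proof.
move=> + act_v; elim: A x => [|P A IH] x; first by left.
move=> /[dup] /starts_at_neq_root P0 /starts_atP[P0v A_v] /=.
have act_P0 : activated (sigmas A c) (P 0%N) by rewrite P0v; exact: activated_sigmas.
move=> /(reachable_sigmaE P0 act_P0)[/(IH _ A_v)[|/(activated_sigma P0)]|]; by [left|right].
Qed.

Lemma activated_sigmasE A x : starts_at v A -> activated (sigmas A c) x <->
  activated c x \/ (activated c v /\ reachable_from c A x).
Proof.
rewrite /reachable_from; elim: A x => [|P A IH] x /=.
  by rewrite big_nil; split; [left|case=> // -[_ []]].
rewrite big_cons => /[dup] /starts_at_neq_root P0 /starts_atP[P0v A_v].
have act_vE : activated (sigmas A c) v <-> activated c v.
  by rewrite IH //; split=> [[|[]]|]//; left.
rewrite activated_sigmaE // P0v act_vE IH //; split.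
- case=> [[act_x|[act_v A_x]]|[act_v R_x]]; [by left|by right; split; [|right]|].
  case: (reachable_sigmasE A_v act_v R_x) => [?|]; first by right; split; [|left].
  by rewrite IH // => -[|[]]; [left|right; split; [|right]].
- case=> [act_x|[act_v [R_x|A_x]]]; [by left; left| |by left; right].
  by right; split; [|exact: reachable_sigmas].
Qed.

Lemma activated_sigmas_start A : starts_at v A ->
  activated (sigmas A c) v <-> activated c v.
Proof. by move=> A_v; rewrite activated_sigmasE //; split=> [[|[]]|]//; left. Qed.

End AddFrogs.

(* The root visits the frogs of [c] would make if they were all activated. *)
Definition potential_visits (c : frog_model V) : set (V * nat * nat) :=
  [set x | (x.1.2 < nfrogs c x.1.1)%N /\ fm_S c x.1.1 x.1.2 x.2 = root].

Definition own_visits (c : frog_model V) (P : nat -> V) : set nat :=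
  [set k | activated c (P 0%N) /\ P k = root].

Definition woken_visits (c : frog_model V) (P : nat -> V) : set (V * nat * nat) :=
  [set x | activated c (P 0%N) /\ ~ activated c x.1.1 /\
           reachable c (range P) x.1.1 /\ potential_visits c x].

(* Otherwise [/=] unfolds [sigma] below the projections [fm_eta] and [fm_S]. *)
Arguments sigma : simpl never.

Section RootVisits.
Variables (P : nat -> V) (c : frog_model V).
Hypothesis P0_neq_root : P 0%N != root.

Let new_visits := (fun k => (P 0%N, fm_eta c (P 0%N), k)) @` own_visits c P.

Lemma root_visits_sigma : root_visits root (sigma P c) =
  root_visits root c `|` new_visits `|` woken_visits c P.
Proof.
have act_P0E : activated (sigma P c) (P 0%N) <-> activated c (P 0%N).
  by rewrite activated_sigmaE //; split=> [[|[]]|]//; left.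
apply/seteqP; split=> -[[u i] k]; rewrite /root_visits /potential_visits; cbn -[sigma].
- case=> act_u [lt_i S_root]; case: (sigma_frogP P0_neq_root lt_i) => [[eu ei]|[lt_i' ES]].
    subst u i; left; right; exists k => //; split; first exact/act_P0E.
    by rewrite sigma_new_frog_path in S_root.
  rewrite ES in S_root; have [act_u'|nact_u] := pselect (activated c u); first by do 2 left.
  case/(activated_sigmaE _ P0_neq_root): act_u => [//|[act_P0 reach_u]].
  by right; split.
- case=> [[[act_u pot_u]|[k' [act_P0 Pk] [<- <- <-]]]|[act_P0 [_ [reach_u [lt_i S_root]]]]].
  + have [lt_i' ES] := sigma_old_frog P0_neq_root pot_u.1.
    by split; [exact: activated_sigma|rewrite ES; split; [|exact: pot_u.2]].
  + split; first exact/act_P0E.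
    by rewrite sigma_new_frog_path; split; [exact: sigma_new_frog_lt|].
  + have [lt_i' ES] := sigma_old_frog P0_neq_root lt_i.
    split; first by apply/(activated_sigmaE _ P0_neq_root); right.
    by rewrite ES.
Qed.

Lemma r_stat_sigma (R : realType) : r_stat root R (sigma P c) =
  r_stat root R c + ecard (own_visits c P) + ecard (woken_visits c P).
Proof.
rewrite [LHS]/r_stat -/(ecard _) root_visits_sigma ecardU; last first.
  move=> [[u i] k] [[act_u _]|[k' [act_P0 _] [<- _ _]]] [_ [nact_u _]]; exact: nact_u.
rewrite ecardU; last first.
  move=> [[u i] k] [_ [lt_i _]] [k' _ [eu ei _]]; move: lt_i.
  by rewrite -eu -ei nfrogs_start // ltnn.
by rewrite /new_visits /ecard esum_image // => k k' _ _ [].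
Qed.
End RootVisits.

Section RootVisitsAtVertex.
Variables (v : V) (c : frog_model V).
Hypothesis v_neq_root : v != root.

Lemma bigcup_woken_visits A : starts_at v A ->
  \big[setU/set0]_(Q <- A) woken_visits c Q =
  [set x | activated c v /\ ~ activated c x.1.1 /\
           reachable_from c A x.1.1 /\ potential_visits c x].
Proof.
rewrite /reachable_from; elim: A => [_|P A IH /starts_atP[P0v A_v]].
  by rewrite !big_nil; apply/seteqP; split=> x // [_ [_ []]].
rewrite !big_cons IH // /woken_visits P0v; apply/seteqP; split=> x /=.
- by case=> -[act_v [nact [R_x pot]]]; do 3 split => //; [left|right].
- by case=> act_v [nact [[R_x|R_x] pot]]; [left|right].
Qed.

Lemma own_visits_sigmas A P : starts_at v A -> P 0%N = v ->
  own_visits (sigmas A c) P = own_visits c P.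
Proof.
move=> A_v P0v; rewrite /own_visits P0v.
have act_vE := activated_sigmas_start c v_neq_root A_v.
by apply/seteqP; split=> k [act_v Pk]; split => //; apply/act_vE.
Qed.

Lemma woken_visits_sigmas P A : starts_at v (P :: A) ->
  woken_visits (sigmas A c) P =
  woken_visits c P `\` \big[setU/set0]_(Q <- A) woken_visits c Q.
Proof.
case/starts_atP=> P0v A_v; rewrite bigcup_woken_visits // /woken_visits P0v.
have act_vE := activated_sigmas_start c v_neq_root A_v.
have act_uE u := activated_sigmasE c v_neq_root u A_v.
have uv u : ~ activated c u -> activated c v -> u != v.
  by move=> nact act_v; apply: contraPneq nact => ->.
apply/seteqP; split=> -[[u i] k] /=.
- case=> /act_vE act_v [nact' [R' pot]].
  have nact : ~ activated c u by move=> /(activated_sigmas v_neq_root A_v).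
  have nRA : ~ reachable_from c A u by move=> RA; apply: nact'; apply/act_uE; right.
  have [E1 E2] := sigmas_other_vertex c v_neq_root A_v (uv u nact act_v).
  rewrite /potential_visits /= E1 E2 in pot.
  case: (reachable_sigmasE v_neq_root A_v act_v R') => // R.
  by split; [|case=> _ [_ []]].
- case=> -[act_v [nact [R pot]]] nU.
  have nRA : ~ reachable_from c A u by move=> RA; apply: nU.
  have [E1 E2] := sigmas_other_vertex c v_neq_root A_v (uv u nact act_v).
  split; first exact/act_vE.
  split; first by case/act_uE => [|[]].
  by split; [exact: (reachable_sigmas v_neq_root A_v)|rewrite /potential_visits /= E1 E2].
Qed.

End RootVisitsAtVertex.
End Dynamics.

Section StatisticProperties.
Variables (R : realType) (V : countType) (root : V).
Local Notation r := (@r_stat V root R).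
Local Notation ecard := (@ecard R _).

Lemma r_stat_sigmas_cons v c P A : v != root -> starts_at v (P :: A) ->
  r (sigmas (P :: A) c) = r (sigmas A c) + ecard (own_visits root c P) +
    ecard (woken_visits root c P `\` \big[setU/set0]_(Q <- A) woken_visits root c Q).
Proof.
move=> v_neq_root /[dup] PA /starts_atP[P0v A_v].
have P0_neq_root : P 0%N != root by rewrite P0v.
rewrite /= r_stat_sigma // (own_visits_sigmas _ v_neq_root) //.
by rewrite (woken_visits_sigmas _ v_neq_root).
Qed.

Lemma iterDelta_sigmas (f : frog_model V -> \bar R) Ps A c :
  iterDelta Ps f (sigmas A c) = diffs (fun B => f (sigmas B c)) Ps A.
Proof. by elim: Ps A => //= P Ps IH A; rewrite -!IH. Qed.

Lemma r_stat_ge0 : is_statistic r.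
Proof. by move=> c; exact: ecard_ge0. Qed.

Section AtVertex.
Variables (v : V) (c : frog_model V).
Hypothesis v_neq_root : v != root.

Let g A := r (sigmas A c).
Let ok (P : nat -> V) := P 0%N == v.

Let w_ge0 P : 0 <= ecard (own_visits root c P).
Proof. exact: ecard_ge0. Qed.

Let g_cons P A : all ok (P :: A) -> g (P :: A) =
  g A + ecard (own_visits root c P) +
  ecard (woken_visits root c P `\` \big[setU/set0]_(Q <- A) woken_visits root c Q).
Proof. exact: r_stat_sigmas_cons. Qed.

Lemma r_stat_iterDelta_sign Ps : (0 < size Ps)%N -> starts_at v Ps ->
  (forall b, r (sigmas (mask b Ps) c) \is a fin_num) ->
  ((-1) ^+ size Ps)%:E * iterDelta Ps r c <= 0.
Proof.
by rewrite -[c]/(sigmas [::] c) iterDelta_sigmas; exact: diffs_sign w_ge0 g_cons Ps.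
Qed.

Lemma r_stat_le_sigma P : P 0%N = v -> r c <= r (sigma P c).
Proof.
move=> P0v; have okP : all ok [:: P] by rewrite /= /ok P0v eqxx.
by have := le_g_cons w_ge0 g_cons okP.
Qed.

Lemma r_stat_sigma2_fin P1 P2 : P1 0%N = v -> P2 0%N = v ->
  r (sigma P1 c) \is a fin_num -> r (sigma P2 c) \is a fin_num ->
  r (sigma P1 (sigma P2 c)) \is a fin_num.
Proof. by move=> P1v P2v; apply: (fin_g_pair g_cons); apply/eqP. Qed.

End AtVertex.

Lemma r_stat_fin_numE c : (r c \is a fin_num) = (r c != +oo).
Proof. by rewrite ge0_fin_numE ?ltey //; exact: r_stat_ge0. Qed.

Lemma r_stat_cond_i m : (0 < m)%N -> cond_i root r m.
Proof.
move=> m_gt0 c Ps _ size_Ps [v [v_neq_root Ps_v]] fin_masks; subst m.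
exact: r_stat_iterDelta_sign v_neq_root _ m_gt0 Ps_v fin_masks.
Qed.

Lemma r_stat_cond_ii : cond_ii root r.
Proof.
move=> c P _ P0_neq_root r_oo; apply/eqP; rewrite -leye_eq -r_oo.
exact: r_stat_le_sigma P0_neq_root _ erefl.
Qed.

Lemma r_stat_cond_iii : cond_iii root r.
Proof.
move=> c P1 P2 _ P1_neq_root P21 r12_oo.
have [r1_oo|r1_fin] := eqVneq (r (sigma P1 c)) +oo; first by left.
have [r2_oo|r2_fin] := eqVneq (r (sigma P2 c)) +oo; first by right.
have := r_stat_sigma2_fin (c := c) P1_neq_root erefl P21.
by rewrite !r_stat_fin_numE r12_oo eqxx => /(_ r1_fin r2_fin).
Qed.

End StatisticProperties.

Section Continuity.
Variables (V : countType) (root : V).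
Local Notation activated := (activated root).
Local Notation nfrogs := (nfrogs root).
Local Notation root_visits := (root_visits root).

Lemma activated_le c1 c2 x : fm_S c1 = fm_S c2 ->
  (forall u, (nfrogs c1 u <= nfrogs c2 u)%N) -> activated c1 x -> activated c2 x.
Proof.
move=> eqS le12; elim=> [|u i k _ IH lt_i]; first exact: act_root.
by rewrite eqS; apply: act_step (leq_trans lt_i (le12 u)).
Qed.

Lemma root_visits_le c1 c2 : fm_S c1 = fm_S c2 ->
  (forall u, (nfrogs c1 u <= nfrogs c2 u)%N) -> root_visits c1 `<=` root_visits c2.
Proof.
move=> eqS le12 [[u i] k] [act_u [lt_i S_root]]; split; first exact: activated_le act_u.
by split; [exact: leq_trans lt_i (le12 u)|rewrite -eqS].
Qed.

Lemma nfrogs_le (eta1 eta2 : V -> nat) S : (forall u, (eta1 u <= eta2 u)%N) ->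
  forall u, (nfrogs (FM eta1 S) u <= nfrogs (FM eta2 S) u)%N.
Proof. by move=> le12 u; rewrite /nfrogs /=; case: ifP. Qed.

Variables (eta_ : nat -> V -> nat) (eta : V -> nat) (S : V -> nat -> nat -> V).
Hypothesis eta_nd : forall u k, (eta_ k u <= eta_ k.+1 u)%N.
Hypothesis eta_cvg : forall u, \forall k \near \oo, eta_ k u = eta u.

Let eta_homo u : {homo eta_^~ u : m n / (m <= n)%N >-> (m <= n)%N}.
Proof. by apply: homo_leq => //; exact: leq_trans. Qed.

Let eta_le u k : (eta_ k u <= eta u)%N.
Proof.
have [N _ etaN] := eta_cvg u; rewrite -(etaN (maxn k N) (leq_maxr _ _)).
exact/eta_homo/leq_maxl.
Qed.

Let root_visits_homo :
  {homo (fun k => root_visits (FM (eta_ k) S)) : m n / (m <= n)%N >-> m `<=` n}.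
Proof.
by move=> m n le_mn; apply: root_visits_le => //; apply: nfrogs_le => u; exact: eta_homo.
Qed.

Let activated_eventually x : activated (FM eta S) x ->
  exists K, activated (FM (eta_ K) S) x.
Proof.
elim=> [|u i k _ [K1 act_u] lt_i]; first by exists 0%N; exact: act_root.
have [N _ etaN] := eta_cvg u; exists (maxn K1 N); apply: act_step.
  by apply: activated_le act_u => //; apply: nfrogs_le => v; exact/eta_homo/leq_maxl.
by move: lt_i; rewrite /nfrogs /=; case: ifP => // _; rewrite (etaN _ (leq_maxr _ _)).
Qed.

Let root_visits_eventually :
  root_visits (FM eta S) `<=` \bigcup_k root_visits (FM (eta_ k) S).
Proof.
move=> [[u i] k] [/activated_eventually[K1 act_u] [lt_i S_root]].
have [N _ etaN] := eta_cvg u; exists (maxn K1 N) => //; split.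
  by apply: activated_le act_u => //; apply: nfrogs_le => v; exact/eta_homo/leq_maxl.
split => //; move: lt_i; rewrite /nfrogs /=; case: ifP => // _.
by rewrite (etaN _ (leq_maxr _ _)).
Qed.

Lemma r_stat_continuity (R : realType) :
  (forall k, r_stat root R (FM (eta_ k) S) <= r_stat root R (FM (eta_ k.+1) S)) /\
  (fun k => r_stat root R (FM (eta_ k) S)) @ \oo --> r_stat root R (FM eta S).
Proof.
split; first by move=> k; apply/le_ecard/root_visits_homo.
apply: ecard_nondecreasing_cvg root_visits_homo _ root_visits_eventually => k.
by apply: root_visits_le => //; apply: nfrogs_le => u; exact: eta_le.
Qed.

End Continuity.

Lemma r_stat_continuous (R : realType) (V : countType) (root : V) :
  continuous_stat (@r_stat V root R).
Proof. by move=> eta_ eta S _ eta_nd eta_cvg; exact: r_stat_continuity. Qed.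

Theorem proposition4 (R : realType) (V : countType) (root : V) :
  (continuous_stat (@r_stat V root R) /\ icv_stat root (@r_stat V root R)) /\
  (continuous_stat (@r_stat V root R) /\ pgf_stat root (@r_stat V root R)).
Proof.
have cont := @r_stat_continuous R V root.
have r_ge0 := @r_stat_ge0 R V root.
have cond_ii_r := @r_stat_cond_ii R V root.
have cond_iii_r := @r_stat_cond_iii R V root.
have cond_i_r := @r_stat_cond_i R V root.
by do !split => //; exact: cond_i_r.
Qed.
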